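(* Let $M=M_{\bar0}\oplus M_{\bar1}$ be an $\mathcal{R}$-module which is free of rank $1$ as a $U(\eta)$-module, $\eta=\mathbb{C}L_{0,0}\oplus\mathbb{C}G_{0,0}$, with a homogeneous free generator $1\in M_{\bar0}$, so $M=\mathbb{C}[L_{0,0}]1\oplus G_{0,0}\mathbb{C}[L_{0,0}]1$. Write $f(t^2)1:=f(L_{0,0})1$ and $t1:=G_{0,0}1$. Suppose $\lambda\in\mathbb{C}^*$ and $a,b\in\mathbb{C}$ are such that for all $m\in\mathbb{Z}$, $i\in\mathbb{Z}_+$ and $f\in\mathbb{C}[t^2]$, $L_{m,i}f(t^2)1=\lambda^m(\delta_{i,0}(t^2-mqa)+\delta_{q,-1}\delta_{i,1}b)f(t^2-mq)1$. Then $G_{m,i}1=\lambda^m\delta_{i,0}\,t1$ (i.e. $G_{m,i}1=\lambda^m\delta_{i,0}G_{0,0}1$) for all $m\in\mathbb{Z}$ and $i\in\mathbb{Z}_+$.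
   Context: Fix $q\in\mathbb{C}^*$; $\mathbb{Z}_+=\{0,1,2,\dots\}$; $\delta$ is the Kronecker delta. The Ramond-Block algebra $\mathcal{R}$ is the Lie superalgebra over $\mathbb{C}$ with even basis $\{L_{m,i}\mid m\in\mathbb{Z},i\in\mathbb{Z}_+\}$, odd basis $\{G_{l,j}\mid l\in\mathbb{Z},j\in\mathbb{Z}_+\}$ and brackets $[L_{m,i},L_{n,j}]=(n(i+q)-m(j+q))L_{m+n,i+j}$, $[L_{m,i},G_{l,j}]=(l(i+q)-m(j+\frac{q}{2}))G_{m+l,i+j}$, $[G_{l,i},G_{r,j}]=2qL_{l+r,i+j}$. Modules are supermodules. *)

From HB Require Import structures.
From mathcomp Require Import all_boot all_order all_algebra.
From mathcomp Require Import reals complex.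
Set Implicit Arguments. Unset Strict Implicit. Unset Printing Implicit Defensive.
Import Order.TTheory GRing.Theory Num.Theory.
Local Open Scope ring_scope.

(* The complex numbers are modelled as R[i] for an arbitrary R : realType
   (every realType is a complete archimedean ordered field, i.e. the reals). *)

Section RamondBlock.
Variable K : fieldType.
Variable V : lmodType K.

Definition pol_act (A : V -> V) (f : {poly K}) (v : V) : V :=
  \sum_(k < size f) f`_k *: iter k A v.

Definition subspace (P : V -> Prop) : Prop :=
  P 0 /\ forall (c : K) (u w : V), P u -> P w -> P (c *: u + w).

Definition super_decomposition (V0 V1 : V -> Prop) : Prop :=
  [/\ subspace V0, subspace V1,
      (forall v, exists v0 v1, [/\ V0 v0, V1 v1 & v = v0 + v1])
    & (forall v, V0 v -> V1 v -> v = 0)].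

(* Action of the basis elements L_{m,i} (even) and G_{l,j} (odd) of the
   Ramond-Block algebra R (parameter q) on the supermodule V = V0 (+) V1:
   parity compatibility and the super-bracket relations. *)
Definition RB_module (q : K) (V0 V1 : V -> Prop)
    (L G : int -> nat -> {linear V -> V}) : Prop :=
  super_decomposition V0 V1 /\
  [/\ (forall m i v, (V0 v -> V0 (L m i v)) /\ (V1 v -> V1 (L m i v))),
      (forall l j v, (V0 v -> V1 (G l j v)) /\ (V1 v -> V0 (G l j v))),
      (forall (m n : int) (i j : nat) v,
         L m i (L n j v) - L n j (L m i v) =
         (n%:~R * (i%:R + q) - m%:~R * (j%:R + q)) *: L (m + n) (i + j)%N v),
      (forall (m l : int) (i j : nat) v,
         L m i (G l j v) - G l j (L m i v) =
         (l%:~R * (i%:R + q) - m%:~R * (j%:R + q / 2)) *: G (m + l) (i + j)%N v)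
    & (forall (l r : int) (i j : nat) v,
         G l i (G r j v) + G r j (G l i v) = (2 * q) *: L (l + r) (i + j)%N v)].

(* V is free of rank 1 over U(eta), eta = C L_{0,0} + C G_{0,0}, with free
   generator v1: the PBW basis of U(eta) is {L00^k, G00 L00^k}, so this says
   (f, g) |-> f(L00) v1 + G00 g(L00) v1 is a bijection C[x]^2 -> V. *)
Definition free_rank1_eta (L G : int -> nat -> {linear V -> V}) (v1 : V) : Prop :=
  bijective (fun fg : {poly K} * {poly K} =>
    pol_act (L 0 0%N) fg.1 v1 + G 0 0%N (pol_act (L 0 0%N) fg.2 v1)).

(* The polynomial  delta_{i,0}(t^2 - m q a) + delta_{q,-1} delta_{i,1} b
   in the variable x = t^2. *)
Definition Lcoef (q a b : K) (m : int) (i : nat) : {poly K} :=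
  (i == 0%N)%:R *: ('X - (m%:~R * q * a)%:P)
  + (((q == -1) && (i == 1%N))%:R * b)%:P.

End RamondBlock.

From HB Require Import structures.
From mathcomp Require Import all_boot all_order all_algebra.
From mathcomp Require Import reals complex.
From mathcomp Require Import ring zify.
Set Implicit Arguments. Unset Strict Implicit. Unset Printing Implicit Defensive.
Import Order.TTheory GRing.Theory Num.Theory.
Local Open Scope ring_scope.

(* Write G_{m,i} 1 = G_{0,0} g(L_{0,0}) 1, which parity forces.  Since
   [L_{0,0}, G_{m,i}] = mq G_{m,i}, the operator G_{m,i} turns f(L_{0,0})
   into f(L_{0,0} - mq), and G_{0,0}^2 = q L_{0,0}.  Computing G_{m,i}^2 1
   once through [G_{0,0}, G_{m,i}] = 2q L_{m,i} and once as q L_{2m,2i} 1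
   gives a polynomial identity between g and its shift g(x - mq) whose
   only solutions are g = lambda^m for i = 0 and g = 0 for i > 0. *)

Section PolAct.
Variables (K : fieldType) (V : lmodType K) (A : {linear V -> V}).

Lemma pol_act_widen (f : {poly K}) n v : (size f <= n)%N ->
  pol_act A f v = \sum_(k < n) f`_k *: iter k A v.
Proof.
move=> le_f_n; rewrite /pol_act (big_ord_widen n (fun k => f`_k *: iter k A v) le_f_n).
rewrite big_mkcond; apply: eq_bigr => k _; case: ifP => // /negbT.
by rewrite -leqNgt => /(nth_default 0) ->; rewrite scale0r.
Qed.

Lemma pol_act_lin c (f g : {poly K}) v :
  pol_act A (c *: f + g) v = c *: pol_act A f v + pol_act A g v.
Proof.
set n := maxn (size f) (size g).
have le_f : (size f <= n)%N by rewrite leq_maxl.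
have le_g : (size g <= n)%N by rewrite leq_maxr.
have le_fg : (size (c *: f + g)%R <= n)%N.
  by rewrite (leq_trans (size_polyD _ _)) // geq_max (leq_trans (size_scale_leq _ _)).
rewrite !(pol_act_widen _ le_f, pol_act_widen _ le_g, pol_act_widen _ le_fg).
rewrite scaler_sumr -big_split; apply: eq_bigr => k _.
by rewrite coefD coefZ scalerDl scalerA.
Qed.

Lemma pol_act0 v : pol_act A 0 v = 0.
Proof. by rewrite /pol_act size_poly0 big_ord0. Qed.

Lemma pol_actD f g v : pol_act A (f + g) v = pol_act A f v + pol_act A g v.
Proof. by have := pol_act_lin 1 f g v; rewrite !scale1r. Qed.

Lemma pol_actZ c f v : pol_act A (c *: f) v = c *: pol_act A f v.
Proof. by have := pol_act_lin c f 0 v; rewrite !addr0 pol_act0 addr0. Qed.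

Lemma pol_actB f g v : pol_act A (f - g) v = pol_act A f v - pol_act A g v.
Proof. by rewrite pol_actD -(scaleN1r g) pol_actZ scaleN1r. Qed.

Lemma pol_actC c v : pol_act A c%:P v = c *: v.
Proof.
rewrite (pol_act_widen _ (size_polyC_leq1 c)) big_ord_recl big_ord0 addr0.
by rewrite coefC.
Qed.

Lemma pol_act1 v : pol_act A 1 v = v.
Proof. by rewrite -polyC1 pol_actC scale1r. Qed.

Lemma pol_actXM f v : pol_act A ('X * f) v = A (pol_act A f v).
Proof.
have le_Xf : (size ('X * f)%R <= (size f).+1)%N.
  by rewrite (leq_trans (size_polyMleq _ _)) // size_polyX.
rewrite (pol_act_widen _ le_Xf) big_ord_recl coefXM eqxx scale0r add0r.
by rewrite linear_sum; apply: eq_bigr => k _; rewrite coefXM /= linearZ.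
Qed.

Lemma pol_act_MXaddC p c v :
  pol_act A (p * 'X + c%:P) v = A (pol_act A p v) + c *: v.
Proof. by rewrite pol_actD mulrC pol_actXM pol_actC. Qed.

Lemma pol_act_scaler f c v : pol_act A f (c *: v) = c *: pol_act A f v.
Proof.
elim/poly_ind: f => [|p d IHp]; first by rewrite !pol_act0 scaler0.
by rewrite !pol_act_MXaddC IHp linearZ scalerDr !scalerA mulrC.
Qed.

Lemma pol_actM f g v : pol_act A f (pol_act A g v) = pol_act A (f * g) v.
Proof.
elim/poly_ind: f => [|p d IHp]; first by rewrite mul0r !pol_act0.
rewrite pol_act_MXaddC IHp mulrDl pol_actD mul_polyC pol_actZ.
by rewrite mulrAC (mulrC (p * g)) pol_actXM.
Qed.

Lemma pol_act_closed (P : V -> Prop) f v : subspace P ->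
  (forall w, P w -> P (A w)) -> P v -> P (pol_act A f v).
Proof.
move=> [P0 PS] PA Pv; elim/poly_ind: f => [|p d IHp]; first by rewrite pol_act0.
by rewrite pol_act_MXaddC addrC; apply: PS => //; apply: PA.
Qed.

Lemma pol_act_shift (T : {linear V -> V}) s f v :
  (forall w, T (A w) = A (T w) - s *: T w) ->
  T (pol_act A f v) = pol_act A (f \Po ('X - s%:P)) (T v).
Proof.
move=> TA; elim/poly_ind: f => [|p c IHp].
  by rewrite comp_poly0 !pol_act0 linear0.
rewrite pol_act_MXaddC linearD linearZ /= TA IHp.
rewrite comp_polyD comp_polyM comp_polyX comp_polyC mulrBr pol_actD pol_actB.
by rewrite pol_actC mulrC pol_actXM mulrC mul_polyC pol_actZ.
Qed.

End PolAct.

Section OddSquare.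
Variable K : fieldType.

(* If G_{m,i} 1 = G_{0,0} g(L_{0,0}) 1 and L_{m,i} f(L_{0,0}) 1 is
   mu ell(L_{0,0}) f(L_{0,0} - s) 1, then G_{m,i}^2 1 = q odd_square(L_{0,0}) 1. *)
Definition odd_square (mu : K) (ell : {poly K}) (s : K) (g : {poly K}) :=
  (2 * mu) *: (ell * (g \Po ('X - s%:P))) - (g \Po ('X - s%:P)) * ('X * g).

Lemma odd_squareE mu ell s g :
  odd_square mu ell s g = (g \Po ('X - s%:P)) * ((2 * mu) *: ell - 'X * g).
Proof. by rewrite /odd_square scalerAl (mulrC _ (_ \Po _)) -mulrBr. Qed.

Lemma odd_square_eq0 mu c s g : odd_square mu c%:P s g = 0 -> g = 0.
Proof.
rewrite odd_squareE => /eqP; rewrite mulf_eq0 => /orP[].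
  by rewrite comp_poly2_eq0 ?size_XsubC // => /eqP.
rewrite subr_eq0 scale_polyC => /eqP Xg_const.
have : ('X * g)`_0 = 0 by rewrite coefXM.
rewrite -Xg_const coefC /= => const0.
by move/eqP: Xg_const; rewrite const0 eq_sym mulf_eq0 polyX_eq0 => /eqP.
Qed.

Lemma odd_square_size_le1 mu c s e g : mu != 0 ->
  odd_square mu ('X - c%:P) s g = (mu * mu) *: ('X - e%:P) -> (size g <= 1)%N.
Proof.
move=> mu_neq0; rewrite odd_squareE => E.
have size_rhs : size ((mu * mu) *: ('X - e%:P)) = 2.
  by rewrite size_scale ?mulf_neq0 // size_XsubC.
set h := (2 * mu) *: _ - _ in E.
have [g0 | g_neq0] := eqVneq g 0; first by rewrite g0 size_poly0.
have h_neq0 : h != 0.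
  by apply: contra_eqN size_rhs => /eqP h0; rewrite -E h0 mulr0 size_poly0.
have size_shift : size (g \Po ('X - s%:P)) = size g.
  by rewrite size_comp_poly2 // size_XsubC.
rewrite leqNgt; apply/negP => size_g_gt1.
have size_h : size h = (size g).+1.
  rewrite /h addrC size_polyDl size_polyN (mulrC 'X) size_mulX //.
  by rewrite (leq_ltn_trans (size_scale_leq _ _)) // size_XsubC.
move: size_rhs; rewrite -E size_mul // ?size_h ?size_shift; first lia.
by rewrite -size_poly_eq0 size_shift size_poly_eq0.
Qed.

Lemma odd_square_eqXsubC mu c s e g : mu != 0 ->
  odd_square mu ('X - c%:P) s g = (mu * mu) *: ('X - e%:P) -> g = mu%:P.
Proof.
move=> mu_neq0 E; have := odd_square_size_le1 mu_neq0 E.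
move=> /size1_polyC g_const; rewrite g_const; congr _%:P.
move: E; rewrite /odd_square g_const comp_polyC => /(congr1 (coefp 1)) /=.
rewrite !coefE /= !subr0 !mulr1 !mul1r => coef1.
have : (g`_0 - mu) ^+ 2 = mu * mu - (2 * mu * g`_0 - g`_0 * g`_0) by ring.
by rewrite coef1 subrr => /eqP; rewrite sqrf_eq0 subr_eq0 => /eqP.
Qed.

End OddSquare.

Section Lcoef.
Variables (K : fieldType) (q a b : K) (m : int).

Lemma Lcoef0 : Lcoef q a b m 0 = 'X - (m%:~R * q * a)%:P.
Proof. by rewrite /Lcoef eqxx scale1r andbF mul0r addr0. Qed.

Lemma LcoefS i : Lcoef q a b m i.+1 = (((q == -1) && (i == 0%N))%:R * b)%:P.
Proof. by rewrite /Lcoef scale0r add0r. Qed.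

Lemma Lcoef_gt1 i : (1 < i)%N -> Lcoef q a b m i = 0.
Proof. by case: i => [|[|i]] // _; rewrite LcoefS andbF mul0r. Qed.

End Lcoef.

Section RBModule.
Variables (K : fieldType) (V : lmodType K) (q : K) (V0 V1 : V -> Prop).
Variables (L G : int -> nat -> {linear V -> V}).
Hypothesis RB : RB_module q V0 V1 L G.

Local Notation L00 := (L 0 0%N).
Local Notation G00 := (G 0 0%N).

Lemma G_L00 m i w : G m i (L00 w) = L00 (G m i w) - (m%:~R * q) *: G m i w.
Proof.
have [_ [_ _ _ LG _]] := RB.
have := LG 0 m 0%N i w; rewrite add0r add0n mulr0z mul0r subr0 add0r => <-.
by rewrite opprB addrC subrK.
Qed.

Lemma G_pol_act m i f v :
  G m i (pol_act L00 f v) = pol_act L00 (f \Po ('X - (m%:~R * q)%:P)) (G m i v).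
Proof. exact/pol_act_shift/G_L00. Qed.

Lemma G00_pol_act f v : G00 (pol_act L00 f v) = pol_act L00 f (G00 v).
Proof. by rewrite G_pol_act mulr0z mul0r subr0 comp_polyXr. Qed.

Lemma G_G00 m i w : G m i (G00 w) = (2 * q) *: L m i w - G00 (G m i w).
Proof.
have [_ [_ _ _ _ GG]] := RB.
by have := GG 0 m 0%N i w; rewrite add0r add0n => <-; rewrite addrC addKr.
Qed.

Hypothesis two_neq0 : (2 : K) != 0.

Lemma G_sqr m i w : G m i (G m i w) = q *: L (m + m) (i + i) w.
Proof.
have [_ [_ _ _ _ GG]] := RB.
apply: (scalerI two_neq0); rewrite scalerA -GG.
by rewrite scaler_nat mulr2n.
Qed.

Variables (v1 : V) (lambda a b : K).
Hypotheses (v1_even : V0 v1) (free : free_rank1_eta L G v1).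
Hypothesis L_action : forall (m : int) (i : nat) (f : {poly K}),
  L m i (pol_act L00 f v1) =
  pol_act L00 (lambda ^ m *: (Lcoef q a b m i * (f \Po ('X - (m%:~R * q)%:P)))) v1.

Lemma pol_act_generator_inj : injective (fun f => pol_act L00 f v1).
Proof.
move=> f g /= E; have := bij_inj free (x1 := (f, 0)) (x2 := (g, 0)).
by rewrite /= !pol_act0 !linear0 !addr0 => /(_ E) [].
Qed.

Lemma G_generator_odd m i : exists g, G m i v1 = G00 (pol_act L00 g v1).
Proof.
have [[V0sub V1sub _ V0V1_eq0] [Leven Godd _ _ _]] := RB.
have even_pol_act h : V0 (pol_act L00 h v1).
  by apply: pol_act_closed => // w; case: (Leven 0 0%N w).
have [inv_fg _ inv_fgK] := free.
move: (inv_fgK (G m i v1)); case: (inv_fg _) => f g /= Gv1; exists g.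
have odd_f : V1 (pol_act L00 f v1).
  have -> : pol_act L00 f v1 = (-1) *: G00 (pol_act L00 g v1) + G m i v1.
    by rewrite -Gv1 scaleN1r addrC addrK.
  by apply: V1sub.2; [apply: (Godd 0 0%N _).1 | apply: (Godd m i _).1].
by rewrite -Gv1 (V0V1_eq0 _ (even_pol_act f) odd_f) add0r.
Qed.

Hypothesis q_neq0 : q != 0.

Lemma odd_square_generator m i g : G m i v1 = G00 (pol_act L00 g v1) ->
  odd_square (lambda ^ m) (Lcoef q a b m i) (m%:~R * q) g =
  lambda ^ (m + m) *: Lcoef q a b (m + m) (i + i).
Proof.
move=> Gv1; apply: pol_act_generator_inj => /=; apply: (scalerI q_neq0).
transitivity (G m i (G m i v1)); last first.
  by rewrite G_sqr -{1}(pol_act1 L00 v1) L_action -polyC1 comp_polyC mulr1 pol_actZ.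
rewrite Gv1 G_G00 L_action G_pol_act Gv1 G00_pol_act G_sqr addr0 addn0.
rewrite pol_act_scaler -pol_actXM pol_actM.
by rewrite /odd_square pol_actB !pol_actZ scalerBr !scalerA mulrCA mulrA.
Qed.

End RBModule.

Theorem lemma3p4 (R : realType) (q : R[i]) (V : lmodType R[i])
    (V0 V1 : V -> Prop) (L G : int -> nat -> {linear V -> V}) (v1 : V)
    (lambda a b : R[i]) :
  q != 0 ->
  RB_module q V0 V1 L G ->
  V0 v1 ->
  free_rank1_eta L G v1 ->
  lambda != 0 ->
  (forall (m : int) (i : nat) (f : {poly R[i]}),
     L m i (pol_act (L 0 0%N) f v1) =
     pol_act (L 0 0%N)
       (lambda ^ m *: (Lcoef q a b m i * (f \Po ('X - (m%:~R * q)%:P)))) v1) ->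
  forall (m : int) (i : nat),
    G m i v1 = (lambda ^ m * (i == 0%N)%:R) *: G 0 0%N v1.
Proof.
move=> q_neq0 RB v1_even free lambda_neq0 L_action m i.
have two_neq0 : (2 : R[i]) != 0 by rewrite pnatr_eq0.
have [g Gv1] := G_generator_odd RB v1_even free m i.
have := odd_square_generator RB two_neq0 free L_action q_neq0 Gv1.
rewrite expfzDr //; case: i Gv1 => [|i] Gv1.
  rewrite !Lcoef0 => /(odd_square_eqXsubC (expfz_neq0 m lambda_neq0)) g_const.
  by rewrite Gv1 g_const pol_actC linearZ mulr1.
rewrite LcoefS Lcoef_gt1 ?scaler0; last by rewrite addnS.
by move=> /odd_square_eq0 g0; rewrite Gv1 g0 pol_act0 linear0 mulr0 scale0r.
Qed.
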